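(* Let $\mathcal{C}$ be a monoidal category, $\mathcal{K}$ a bicategory with (at least) two objects $0$ and $1$ such that $\mathcal{K}(0,0)=\mathcal{K}(1,1)=\mathcal{C}$, and let $\mathcal{F},\mathcal{G}:Del(\mathcal{C})\to\mathcal{K}$ be pseudofunctors with $\mathcal{F}( * )=0$, $\mathcal{G}( * )=1$ and $\mathcal{F}_{*,*}=\mathcal{G}_{*,*}=\mathrm{Id}_\mathcal{C}$. Let $\mathcal{M}=\mathcal{K}(0,1)$, a $(\mathcal{C},\mathcal{C})$-bimodule category via horizontal composition. Then there are canonical isomorphisms of categories $\mathcal{Z}^l_\mathcal{C}(\mathcal{M})\cong\mathrm{Pseudo}(\mathcal{F},\mathcal{G})\cong\mathcal{Z}^r_\mathcal{C}(\mathcal{M})$.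
   Context: $Del(\mathcal{C})$ is the one-object bicategory (object $*$) with hom-category $\mathcal{C}$ and horizontal composition $\otimes$ (composite $g\circ f$ corresponds to $g\otimes f$). The actions on $\mathcal{M}$ are $c\rhd m=c\circ m$, $m\lhd d=m\circ d$. $\mathcal{Z}^l_\mathcal{C}(\mathcal{M})$ is the category of pairs $(M,\sigma)$, $M\in\mathcal{M}$, $\sigma_X:M\lhd X\to X\rhd M$ a natural isomorphism ($X\in\mathcal{C}$) with $(\mathrm{id}_Y\rhd\sigma_X)(\sigma_Y\lhd\mathrm{id}_X)=\sigma_{Y\otimes X}$ and $\sigma_I=\mathrm{id}_M$ (up to coherence), with morphisms $f$ satisfying $(\mathrm{id}_X\rhd f)\sigma_X=\tau_X(f\lhd\mathrm{id}_X)$; $\mathcal{Z}^r_\mathcal{C}(\mathcal{M})$ is defined analogously with natural isomorphisms $\tilde\sigma_X:X\rhd M\to M\lhd X$ satisfying $(\tilde\sigma_Y\lhd\mathrm{id}_X)(\mathrm{id}_Y\rhd\tilde\sigma_X)=\tilde\sigma_{Y\otimes X}$, $\tilde\sigma_I=\mathrm{id}$, and morphisms with $(f\lhd\mathrm{id})\tilde\sigma_X=\tilde\tau_X(\mathrm{id}\rhd f)$. $\mathrm{Pseudo}(\mathcal{F},\mathcal{G})$ is the category of pseudonatural transformations $\mathcal{F}\Rightarrow\mathcal{G}$ (1-cell component $\chi_*$ and invertible 2-cells $\chi_f:\chi_*\circ\mathcal{F}(f)\Rightarrow\mathcal{G}(f)\circ\chi_*$ natural in $f$ and compatible with the composition and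 unit constraints of $\mathcal{F},\mathcal{G}$) and their modifications. *)

(* Morphism equality is Leibniz equality; proof irrelevance and
   functional extensionality are used for sigma-typed hom-sets. *)
From Stdlib Require Import ProofIrrelevance FunctionalExtensionality.

Record Category := {
  ob :> Type;
  hom : ob -> ob -> Type;
  idm : forall a, hom a a;
  cmp : forall a b c, hom b c -> hom a b -> hom a c;
  cmp_assoc : forall a b c d (h : hom c d) (g : hom b c) (f : hom a b),
      cmp a c d h (cmp a b c g f) = cmp a b d (cmp b c d h g) f;
  cmp_idl : forall a b (f : hom a b), cmp a b b (idm b) f = f;
  cmp_idr : forall a b (f : hom a b), cmp a a b f (idm a) = f }.

Arguments hom {_} _ _.
Arguments idm {_} _.
Arguments cmp {_ _ _ _} _ _.
Arguments cmp_assoc {_ _ _ _ _} _ _ _.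
Arguments cmp_idl {_ _ _} _.
Arguments cmp_idr {_ _ _} _.

Notation "g ∘ f" := (cmp g f) (at level 40, left associativity).

Definition is_iso {C : Category} {a b : ob C} (f : hom a b) : Prop :=
  exists g : hom b a, g ∘ f = idm a /\ f ∘ g = idm b.

Record Functor (C D : Category) := {
  fob : ob C -> ob D;
  fmor : forall a b, @hom C a b -> @hom D (fob a) (fob b);
  fmor_id : forall a, fmor a a (idm a) = idm (fob a);
  fmor_cmp : forall a b c (g : hom b c) (f : hom a b),
      fmor a c (g ∘ f) = fmor b c g ∘ fmor a b f }.

Arguments fob {C D} _ _.
Arguments fmor {C D} _ {a b} _.

Definition IdFunctor (C : Category) : Functor C C.
Proof.
  refine {| fob := fun a => a; fmor := fun a b f => f |}; reflexivity.
Defined.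

Definition CompFunctor {A B C : Category} (G : Functor B C) (F : Functor A B)
  : Functor A C.
Proof.
  refine {| fob := fun a => fob G (fob F a);
            fmor := fun a b f => fmor G (fmor F f) |}.
  - intros; rewrite !fmor_id; reflexivity.
  - intros; rewrite !fmor_cmp; reflexivity.
Defined.

Definition CatIso (A B : Category) : Prop :=
  exists (Phi : Functor A B) (Psi : Functor B A),
    CompFunctor Psi Phi = IdFunctor A /\ CompFunctor Phi Psi = IdFunctor B.

Record MonoidalCategory := {
  mC : Category;
  tens : ob mC -> ob mC -> ob mC;
  tens2 : forall a a' b b', hom a a' -> hom b b' -> hom (tens a b) (tens a' b');
  tens2_id : forall a b, tens2 a a b b (idm a) (idm b) = idm (tens a b);
  tens2_cmp : forall a a' a'' b b' b'' (g : hom a' a'') (f : hom a a')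
      (k : hom b' b'') (h : hom b b'),
      tens2 a a'' b b'' (g ∘ f) (k ∘ h) = tens2 a' a'' b' b'' g k ∘ tens2 a a' b b' f h;
  munit : ob mC;
  masc : forall a b c, hom (tens (tens a b) c) (tens a (tens b c));
  masci : forall a b c, hom (tens a (tens b c)) (tens (tens a b) c);
  masc_inv1 : forall a b c, masci a b c ∘ masc a b c = idm _;
  masc_inv2 : forall a b c, masc a b c ∘ masci a b c = idm _;
  masc_nat : forall a a' b b' c c' (f : hom a a') (g : hom b b') (h : hom c c'),
      masc a' b' c' ∘ tens2 _ _ _ _ (tens2 _ _ _ _ f g) h
      = tens2 _ _ _ _ f (tens2 _ _ _ _ g h) ∘ masc a b c;
  mlu : forall a, hom (tens munit a) a;
  mlui : forall a, hom a (tens munit a);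
  mlu_inv1 : forall a, mlui a ∘ mlu a = idm _;
  mlu_inv2 : forall a, mlu a ∘ mlui a = idm _;
  mlu_nat : forall a a' (f : hom a a'),
      mlu a' ∘ tens2 _ _ _ _ (idm munit) f = f ∘ mlu a;
  mru : forall a, hom (tens a munit) a;
  mrui : forall a, hom a (tens a munit);
  mru_inv1 : forall a, mrui a ∘ mru a = idm _;
  mru_inv2 : forall a, mru a ∘ mrui a = idm _;
  mru_nat : forall a a' (f : hom a a'),
      mru a' ∘ tens2 _ _ _ _ f (idm munit) = f ∘ mru a;
  mpentagon : forall a b c d,
      masc a b (tens c d) ∘ masc (tens a b) c d
      = tens2 _ _ _ _ (idm a) (masc b c d) ∘ masc a (tens b c) d
        ∘ tens2 _ _ _ _ (masc a b c) (idm d);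
  mtriangle : forall a b,
      tens2 _ _ _ _ (idm a) (mlu b) ∘ masc a munit b = tens2 _ _ _ _ (mru a) (idm b) }.

Arguments tens2 _ {_ _ _ _} _ _.

Record Bicategory := {
  B0 : Type;
  B1 : B0 -> B0 -> Category;
  bid : forall x, ob (B1 x x);
  hc : forall x y z, ob (B1 y z) -> ob (B1 x y) -> ob (B1 x z);
  hc2 : forall x y z (g g' : B1 y z) (f f' : B1 x y),
      hom g g' -> hom f f' -> hom (hc x y z g f) (hc x y z g' f');
  hc2_id : forall x y z (g : B1 y z) (f : B1 x y),
      hc2 x y z g g f f (idm g) (idm f) = idm (hc x y z g f);
  hc2_cmp : forall x y z (g g' g'' : B1 y z) (f f' f'' : B1 x y)
      (b : hom g' g'') (a : hom g g') (d : hom f' f'') (c : hom f f'),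
      hc2 _ _ _ _ _ _ _ (b ∘ a) (d ∘ c)
      = hc2 _ _ _ _ _ _ _ b d ∘ hc2 _ _ _ _ _ _ _ a c;
  asc : forall x y z w (h : B1 z w) (g : B1 y z) (f : B1 x y),
      hom (hc _ _ _ (hc _ _ _ h g) f) (hc _ _ _ h (hc _ _ _ g f));
  asci : forall x y z w (h : B1 z w) (g : B1 y z) (f : B1 x y),
      hom (hc _ _ _ h (hc _ _ _ g f)) (hc _ _ _ (hc _ _ _ h g) f);
  asc_inv1 : forall x y z w h g f, asci x y z w h g f ∘ asc x y z w h g f = idm _;
  asc_inv2 : forall x y z w h g f, asc x y z w h g f ∘ asci x y z w h g f = idm _;
  asc_nat : forall x y z w (h h' : B1 z w) (g g' : B1 y z) (f f' : B1 x y)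
      (c : hom h h') (b : hom g g') (a : hom f f'),
      asc _ _ _ _ h' g' f' ∘ hc2 _ _ _ _ _ _ _ (hc2 _ _ _ _ _ _ _ c b) a
      = hc2 _ _ _ _ _ _ _ c (hc2 _ _ _ _ _ _ _ b a) ∘ asc _ _ _ _ h g f;
  lu : forall x y (f : B1 x y), hom (hc _ _ _ (bid y) f) f;
  lui : forall x y (f : B1 x y), hom f (hc _ _ _ (bid y) f);
  lu_inv1 : forall x y f, lui x y f ∘ lu x y f = idm _;
  lu_inv2 : forall x y f, lu x y f ∘ lui x y f = idm _;
  lu_nat : forall x y (f f' : B1 x y) (a : hom f f'),
      lu _ _ f' ∘ hc2 _ _ _ _ _ _ _ (idm (bid y)) a = a ∘ lu _ _ f;
  ru : forall x y (f : B1 x y), hom (hc _ _ _ f (bid x)) f;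
  rui : forall x y (f : B1 x y), hom f (hc _ _ _ f (bid x));
  ru_inv1 : forall x y f, rui x y f ∘ ru x y f = idm _;
  ru_inv2 : forall x y f, ru x y f ∘ rui x y f = idm _;
  ru_nat : forall x y (f f' : B1 x y) (a : hom f f'),
      ru _ _ f' ∘ hc2 _ _ _ _ _ _ _ a (idm (bid x)) = a ∘ ru _ _ f;
  pentagon : forall v x y z w (k : B1 z w) (h : B1 y z) (g : B1 x y) (f : B1 v x),
      asc _ _ _ _ k h (hc _ _ _ g f) ∘ asc _ _ _ _ (hc _ _ _ k h) g f
      = hc2 _ _ _ _ _ _ _ (idm k) (asc _ _ _ _ h g f) ∘ asc _ _ _ _ k (hc _ _ _ h g) f
        ∘ hc2 _ _ _ _ _ _ _ (asc _ _ _ _ k h g) (idm f);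
  triangle : forall x y z (g : B1 y z) (f : B1 x y),
      hc2 _ _ _ _ _ _ _ (idm g) (lu _ _ f) ∘ asc _ _ _ _ g (bid y) f
      = hc2 _ _ _ _ _ _ _ (ru _ _ g) (idm f) }.

Arguments hc _ {_ _ _} _ _.
Arguments hc2 _ {_ _ _ _ _ _ _} _ _.
Arguments asc _ {_ _ _ _} _ _ _.
Arguments asci _ {_ _ _ _} _ _ _.
Arguments lu _ {_ _} _.
Arguments lui _ {_ _} _.
Arguments ru _ {_ _} _.
Arguments rui _ {_ _} _.

Definition Del (C : MonoidalCategory) : Bicategory.
Proof.
  refine {| B0 := unit; B1 := fun _ _ => mC C; bid := fun _ => munit C;
            hc := fun _ _ _ g f => tens C g f;
            hc2 := fun _ _ _ _ _ _ _ b a => tens2 C b a;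
            asc := fun _ _ _ _ h g f => masc C h g f;
            asci := fun _ _ _ _ h g f => masci C h g f;
            lu := fun _ _ f => mlu C f; lui := fun _ _ f => mlui C f;
            ru := fun _ _ f => mru C f; rui := fun _ _ f => mrui C f |}.
  all: intros; first [ apply tens2_id | apply tens2_cmp | apply masc_inv1
    | apply masc_inv2 | apply masc_nat | apply mlu_inv1 | apply mlu_inv2
    | apply mlu_nat | apply mru_inv1 | apply mru_inv2 | apply mru_nat
    | apply mpentagon | apply mtriangle ].
Defined.

Definition End (K : Bicategory) (x : B0 K) : MonoidalCategory.
Proof.
  refine {| mC := B1 K x x; tens := fun g f => hc K g f;
            tens2 := fun _ _ _ _ b a => hc2 K b a; munit := bid K x;
            masc := fun h g f => asc K h g f; masci := fun h g f => asci K h g f;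
            mlu := fun f => lu K f; mlui := fun f => lui K f;
            mru := fun f => ru K f; mrui := fun f => rui K f |}.
  all: intros; first [ apply hc2_id | apply hc2_cmp | apply asc_inv1
    | apply asc_inv2 | apply asc_nat | apply lu_inv1 | apply lu_inv2
    | apply lu_nat | apply ru_inv1 | apply ru_inv2 | apply ru_nat
    | apply pentagon | apply triangle ].
Defined.

Record Pseudofunctor (B K : Bicategory) := {
  pob : B0 B -> B0 K;
  pfun : forall x y, Functor (B1 B x y) (B1 K (pob x) (pob y));
  pc : forall x y z (g : B1 B y z) (f : B1 B x y),
      hom (hc K (fob (pfun y z) g) (fob (pfun x y) f)) (fob (pfun x z) (hc B g f));
  pc_iso : forall x y z g f, is_iso (pc x y z g f);
  pc_nat : forall x y z (g g' : B1 B y z) (f f' : B1 B x y) (b : hom g g') (a : hom f f'),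
      pc x y z g' f' ∘ hc2 K (fmor (pfun y z) b) (fmor (pfun x y) a)
      = fmor (pfun x z) (hc2 B b a) ∘ pc x y z g f;
  pu : forall x, hom (bid K (pob x)) (fob (pfun x x) (bid B x));
  pu_iso : forall x, is_iso (pu x);
  p_assoc : forall x y z w (h : B1 B z w) (g : B1 B y z) (f : B1 B x y),
      fmor (pfun x w) (asc B h g f) ∘ pc x y w (hc B h g) f
        ∘ hc2 K (pc y z w h g) (idm (fob (pfun x y) f))
      = pc x z w h (hc B g f) ∘ hc2 K (idm (fob (pfun z w) h)) (pc x y z g f)
        ∘ asc K (fob (pfun z w) h) (fob (pfun y z) g) (fob (pfun x y) f);
  p_lunit : forall x y (f : B1 B x y),
      fmor (pfun x y) (lu B f) ∘ pc x y y (bid B y) f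
        ∘ hc2 K (pu y) (idm (fob (pfun x y) f))
      = lu K (fob (pfun x y) f);
  p_runit : forall x y (f : B1 B x y),
      fmor (pfun x y) (ru B f) ∘ pc x x y f (bid B x)
        ∘ hc2 K (idm (fob (pfun x y) f)) (pu x)
      = ru K (fob (pfun x y) f) }.

Arguments pob {B K} _ _.
Arguments pfun {B K} _ _ _.
Arguments pc {B K} _ {_ _ _} _ _.
Arguments pu {B K} _ _.

Definition pf {B K} (P : Pseudofunctor B K) {x y} (f : B1 B x y) : B1 K (pob P x) (pob P y)
  := fob (pfun P x y) f.
Definition pm {B K} (P : Pseudofunctor B K) {x y} {f f' : B1 B x y} (a : hom f f')
  : hom (pf P f) (pf P f') := fmor (pfun P x y) a.

Record PseudoNat {B K} (P Q : Pseudofunctor B K) := {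
  tc : forall x, B1 K (pob P x) (pob Q x);
  tn : forall x y (f : B1 B x y), hom (hc K (tc y) (pf P f)) (hc K (pf Q f) (tc x));
  tn_iso : forall x y f, is_iso (tn x y f);
  tn_nat : forall x y (f f' : B1 B x y) (a : hom f f'),
      tn x y f' ∘ hc2 K (idm (tc y)) (pm P a) = hc2 K (pm Q a) (idm (tc x)) ∘ tn x y f;
  tn_comp : forall x y z (g : B1 B y z) (f : B1 B x y),
      tn x z (hc B g f) ∘ hc2 K (idm (tc z)) (pc P g f)
      = hc2 K (pc Q g f) (idm (tc x)) ∘ asci K (pf Q g) (pf Q f) (tc x)
        ∘ hc2 K (idm (pf Q g)) (tn x y f) ∘ asc K (pf Q g) (tc y) (pf P f)
        ∘ hc2 K (tn y z g) (idm (pf P f)) ∘ asci K (tc z) (pf P g) (pf P f);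
  tn_unit : forall x,
      tn x x (bid B x) ∘ hc2 K (idm (tc x)) (pu P x)
      = hc2 K (pu Q x) (idm (tc x)) ∘ lui K (tc x) ∘ ru K (tc x) }.

Arguments tc {B K P Q} _ _.
Arguments tn {B K P Q} _ {_ _} _.

Definition is_modif {B K} {P Q : Pseudofunctor B K} (χ ψ : PseudoNat P Q)
  (m : forall x, hom (tc χ x) (tc ψ x)) : Prop :=
  forall x y (f : B1 B x y),
    tn ψ f ∘ hc2 K (m y) (idm (pf P f)) = hc2 K (idm (pf Q f)) (m x) ∘ tn χ f.

Lemma sig_eq {A : Type} {P : A -> Prop} (u v : {a | P a}) :
  proj1_sig u = proj1_sig v -> u = v.
Proof.
  destruct u as [a p], v as [b q]; simpl; intros ->; f_equal; apply proof_irrelevance.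
Qed.

Lemma hc2_cmp_l (K : Bicategory) x y z (g g' g'' : B1 K y z) (f : B1 K x y)
  (b : hom g' g'') (a : hom g g') :
  hc2 K (b ∘ a) (idm f) = hc2 K b (idm f) ∘ hc2 K a (idm f).
Proof. rewrite <- hc2_cmp, cmp_idl; reflexivity. Qed.

Lemma hc2_cmp_r (K : Bicategory) x y z (g : B1 K y z) (f f' f'' : B1 K x y)
  (b : hom f' f'') (a : hom f f') :
  hc2 K (idm g) (b ∘ a) = hc2 K (idm g) b ∘ hc2 K (idm g) a.
Proof. rewrite <- hc2_cmp, cmp_idl; reflexivity. Qed.

Lemma modif_id {B K} {P Q : Pseudofunctor B K} (χ : PseudoNat P Q) :
  is_modif χ χ (fun x => idm (tc χ x)).
Proof. intros x y f. rewrite !hc2_id, cmp_idl, cmp_idr; reflexivity. Qed.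

Lemma modif_cmp {B K} {P Q : Pseudofunctor B K} (χ ψ ρ : PseudoNat P Q)
  (n : forall x, hom (tc ψ x) (tc ρ x)) (m : forall x, hom (tc χ x) (tc ψ x)) :
  is_modif ψ ρ n -> is_modif χ ψ m -> is_modif χ ρ (fun x => n x ∘ m x).
Proof.
  intros Hn Hm x y f.
  rewrite hc2_cmp_l, hc2_cmp_r, cmp_assoc, Hn, <- cmp_assoc, Hm, cmp_assoc.
  reflexivity.
Qed.

Definition Pseudo {B K} (P Q : Pseudofunctor B K) : Category.
Proof.
  refine {| ob := PseudoNat P Q;
            hom := fun χ ψ => { m : forall x, hom (tc χ x) (tc ψ x) | is_modif χ ψ m };
            idm := fun χ => exist _ (fun x => idm (tc χ x)) (modif_id χ);
            cmp := fun χ ψ ρ n m =>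
                     exist _ (fun x => proj1_sig n x ∘ proj1_sig m x)
                       (modif_cmp χ ψ ρ _ _ (proj2_sig n) (proj2_sig m)) |}.
  - intros; apply sig_eq; simpl; apply functional_extensionality_dep; intro;
      apply cmp_assoc.
  - intros; apply sig_eq; simpl; apply functional_extensionality_dep; intro;
      apply cmp_idl.
  - intros; apply sig_eq; simpl; apply functional_extensionality_dep; intro;
      apply cmp_idr.
Defined.

Record BimodData (L R : MonoidalCategory) := {
  bm : Category;
  lact : ob (mC L) -> ob bm -> ob bm;
  lact2 : forall c c' m m', hom c c' -> hom m m' -> hom (lact c m) (lact c' m');
  lact2_id : forall c m, lact2 c c m m (idm c) (idm m) = idm (lact c m);
  lact2_cmp : forall c c' c'' m m' m'' (g : hom c' c'') (f : hom c c')
      (k : hom m' m'') (h : hom m m'),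
      lact2 _ _ _ _ (g ∘ f) (k ∘ h) = lact2 _ _ _ _ g k ∘ lact2 _ _ _ _ f h;
  ract : ob bm -> ob (mC R) -> ob bm;
  ract2 : forall m m' d d', hom m m' -> hom d d' -> hom (ract m d) (ract m' d');
  ract2_id : forall m d, ract2 m m d d (idm m) (idm d) = idm (ract m d);
  ract2_cmp : forall m m' m'' d d' d'' (g : hom m' m'') (f : hom m m')
      (k : hom d' d'') (h : hom d d'),
      ract2 _ _ _ _ (g ∘ f) (k ∘ h) = ract2 _ _ _ _ g k ∘ ract2 _ _ _ _ f h;
  l_as : forall c c' m, hom (lact (tens L c c') m) (lact c (lact c' m));
  l_asi : forall c c' m, hom (lact c (lact c' m)) (lact (tens L c c') m);
  r_as : forall m d d', hom (ract m (tens R d d')) (ract (ract m d) d');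
  r_asi : forall m d d', hom (ract (ract m d) d') (ract m (tens R d d'));
  mid : forall c m d, hom (ract (lact c m) d) (lact c (ract m d));
  midi : forall c m d, hom (lact c (ract m d)) (ract (lact c m) d);
  l_un : forall m, hom (lact (munit L) m) m;
  l_uni : forall m, hom m (lact (munit L) m);
  r_un : forall m, hom (ract m (munit R)) m;
  r_uni : forall m, hom m (ract m (munit R)) }.

Arguments bm {L R} _.
Arguments lact {L R} _ _ _.
Arguments lact2 {L R} _ {_ _ _ _} _ _.
Arguments ract {L R} _ _ _.
Arguments ract2 {L R} _ {_ _ _ _} _ _.
Arguments l_as {L R} _ _ _ _.
Arguments l_asi {L R} _ _ _ _.
Arguments r_as {L R} _ _ _ _.
Arguments r_asi {L R} _ _ _ _.
Arguments mid {L R} _ _ _ _.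
Arguments midi {L R} _ _ _ _.
Arguments l_un {L R} _ _.
Arguments l_uni {L R} _ _.
Arguments r_un {L R} _ _.
Arguments r_uni {L R} _ _.

Definition bimodK (K : Bicategory) (x y : B0 K) : BimodData (End K y) (End K x).
Proof.
  refine (@Build_BimodData (End K y) (End K x) (B1 K x y)
            (fun c m => hc K c m) (fun _ _ _ _ a b => hc2 K a b) _ _
            (fun m d => hc K m d) (fun _ _ _ _ a b => hc2 K a b) _ _
            (fun c c' m => asc K c c' m) (fun c c' m => asci K c c' m)
            (fun m d d' => asci K m d d') (fun m d d' => asc K m d d')
            (fun c m d => asc K c m d) (fun c m d => asci K c m d)
            (fun m => lu K m) (fun m => lui K m)
            (fun m => ru K m) (fun m => rui K m)).
  all: intros; first [apply hc2_id | apply hc2_cmp].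
Defined.

Record ZLob (C : MonoidalCategory) (D : BimodData C C) := {
  zl_m : ob (bm D);
  zl_s : forall X : ob (mC C), hom (ract D zl_m X) (lact D X zl_m);
  zl_iso : forall X, is_iso (zl_s X);
  zl_nat : forall X X' (f : hom X X'),
      lact2 D f (idm zl_m) ∘ zl_s X = zl_s X' ∘ ract2 D (idm zl_m) f;
  zl_tens : forall X Y,
      zl_s (tens C Y X)
      = l_asi D Y X zl_m ∘ lact2 D (idm Y) (zl_s X) ∘ mid D Y zl_m X
        ∘ ract2 D (zl_s Y) (idm X) ∘ r_as D zl_m Y X;
  zl_unit : zl_s (munit C) = l_uni D zl_m ∘ r_un D zl_m }.

Arguments zl_m {C D} _.
Arguments zl_s {C D} _ _.

Record ZRob (C : MonoidalCategory) (D : BimodData C C) := {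
  zr_m : ob (bm D);
  zr_s : forall X : ob (mC C), hom (lact D X zr_m) (ract D zr_m X);
  zr_iso : forall X, is_iso (zr_s X);
  zr_nat : forall X X' (f : hom X X'),
      ract2 D (idm zr_m) f ∘ zr_s X = zr_s X' ∘ lact2 D f (idm zr_m);
  zr_tens : forall X Y,
      zr_s (tens C Y X)
      = r_asi D zr_m Y X ∘ ract2 D (zr_s Y) (idm X) ∘ midi D Y zr_m X
        ∘ lact2 D (idm Y) (zr_s X) ∘ l_as D Y X zr_m;
  zr_unit : zr_s (munit C) = r_uni D zr_m ∘ l_un D zr_m }.

Arguments zr_m {C D} _.
Arguments zr_s {C D} _ _.

Definition is_zl_mor {C D} (s t : ZLob C D) (f : hom (zl_m s) (zl_m t)) : Prop :=
  forall X, lact2 D (idm X) f ∘ zl_s s X = zl_s t X ∘ ract2 D f (idm X).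

Definition is_zr_mor {C D} (s t : ZRob C D) (f : hom (zr_m s) (zr_m t)) : Prop :=
  forall X, ract2 D f (idm X) ∘ zr_s s X = zr_s t X ∘ lact2 D (idm X) f.

Lemma lact2_cmp_r {L R} (D : BimodData L R) c m m' m'' (g : hom m' m'') (f : hom m m') :
  lact2 D (idm c) (g ∘ f) = lact2 D (idm c) g ∘ lact2 D (idm c) f.
Proof. rewrite <- lact2_cmp, cmp_idl; reflexivity. Qed.
Lemma lact2_cmp_l {L R} (D : BimodData L R) c c' c'' m (g : hom c' c'') (f : hom c c') :
  lact2 D (g ∘ f) (idm m) = lact2 D g (idm m) ∘ lact2 D f (idm m).
Proof. rewrite <- lact2_cmp, cmp_idl; reflexivity. Qed.
Lemma ract2_cmp_r {L R} (D : BimodData L R) d m m' m'' (g : hom m' m'') (f : hom m m') :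
  ract2 D (g ∘ f) (idm d) = ract2 D g (idm d) ∘ ract2 D f (idm d).
Proof. rewrite <- ract2_cmp, cmp_idl; reflexivity. Qed.

Lemma zl_mor_id {C D} (s : ZLob C D) : is_zl_mor s s (idm (zl_m s)).
Proof. intro X. rewrite lact2_id, ract2_id, cmp_idl, cmp_idr; reflexivity. Qed.

Lemma zl_mor_cmp {C D} (s t u : ZLob C D) g f :
  is_zl_mor t u g -> is_zl_mor s t f -> is_zl_mor s u (g ∘ f).
Proof.
  intros Hg Hf X. rewrite lact2_cmp_r, ract2_cmp_r.
  rewrite <- cmp_assoc, Hf, cmp_assoc, Hg, <- cmp_assoc; reflexivity.
Qed.

Lemma zr_mor_id {C D} (s : ZRob C D) : is_zr_mor s s (idm (zr_m s)).
Proof. intro X. rewrite lact2_id, ract2_id, cmp_idl, cmp_idr; reflexivity. Qed.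

Lemma zr_mor_cmp {C D} (s t u : ZRob C D) g f :
  is_zr_mor t u g -> is_zr_mor s t f -> is_zr_mor s u (g ∘ f).
Proof.
  intros Hg Hf X. rewrite lact2_cmp_r, ract2_cmp_r.
  rewrite <- cmp_assoc, Hf, cmp_assoc, Hg, <- cmp_assoc; reflexivity.
Qed.

Definition ZL (C : MonoidalCategory) (D : BimodData C C) : Category.
Proof.
  refine {| ob := ZLob C D;
            hom := fun s t => { f : hom (zl_m s) (zl_m t) | is_zl_mor s t f };
            idm := fun s => exist _ (idm (zl_m s)) (zl_mor_id s);
            cmp := fun s t u g f => exist _ (proj1_sig g ∘ proj1_sig f)
                     (zl_mor_cmp s t u _ _ (proj2_sig g) (proj2_sig f)) |}.
  - intros; apply sig_eq; apply cmp_assoc.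
  - intros; apply sig_eq; apply cmp_idl.
  - intros; apply sig_eq; apply cmp_idr.
Defined.

Definition ZR (C : MonoidalCategory) (D : BimodData C C) : Category.
Proof.
  refine {| ob := ZRob C D;
            hom := fun s t => { f : hom (zr_m s) (zr_m t) | is_zr_mor s t f };
            idm := fun s => exist _ (idm (zr_m s)) (zr_mor_id s);
            cmp := fun s t u g f => exist _ (proj1_sig g ∘ proj1_sig f)
                     (zr_mor_cmp s t u _ _ (proj2_sig g) (proj2_sig f)) |}.
  - intros; apply sig_eq; apply cmp_assoc.
  - intros; apply sig_eq; apply cmp_idl.
  - intros; apply sig_eq; apply cmp_idr.
Defined.

Definition bimodC (K : Bicategory) (o0 o1 : B0 K) (C : MonoidalCategory)
  (e0 : End K o0 = C) (e1 : End K o1 = C) : BimodData C C :=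
  match e1 in _ = D return BimodData D C with
  | eq_refl =>
      match e0 in _ = D return BimodData (End K o1) D with
      | eq_refl => bimodK K o0 o1
      end
  end.

(* A functor between monoidal categories together with its (lax) structure
   morphisms; for a pseudofunctor Del(C) -> K this is F_{pt,pt} with its
   composition constraint F_2 and unit constraint F_0. *)
Record MonFunData (C D : MonoidalCategory) := {
  mf : Functor (mC C) (mC D);
  mf2 : forall a b, hom (tens D (fob mf a) (fob mf b)) (fob mf (tens C a b));
  mf0 : hom (munit D) (fob mf (munit C)) }.

Definition homMonAt {C : MonoidalCategory} {K : Bicategory}
  (F : Pseudofunctor (Del C) K) (o : B0 K) (e : pob F tt = o) : MonFunData C (End K o) :=
  match e in _ = o' return MonFunData C (End K o') with
  | eq_refl =>
      @Build_MonFunData C (End K (pob F tt)) (pfun F tt tt)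
         (fun a b => pc F (x := tt) (y := tt) (z := tt) a b) (pu F tt)
  end.

Definition castIdMon (K : Bicategory) (o : B0 K) (C : MonoidalCategory)
  (e : End K o = C) : MonFunData C (End K o) :=
  match e in _ = D return MonFunData D (End K o) with
  | eq_refl =>
      @Build_MonFunData (End K o) (End K o) (IdFunctor (B1 K o o))
         (fun a b => idm (hc K a b)) (idm (bid K o))
  end.

From Stdlib Require Import ProofIrrelevance FunctionalExtensionality JMeq ClassicalEpsilon.

(* As Del(C) has a single object, a pseudonatural transformation F => G is a
   1-cell m : F(pt) -> G(pt) with invertible 2-cells m F(X) => G(X) m natural in X.
   Whiskered by the composition and unit constraints of F and G, its coherence
   axioms become exactly the half-braiding axioms of Z^l for the bimodule
   X |> m = G(X) m, m <| X = m F(X), and modifications become morphisms of the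
   center. All structure maps of this bimodule are invertible, so inverting the
   half-braidings identifies Z^l with Z^r. When F and G are the identity on C
   the bimodule is K(0,1) with horizontal composition. *)

Section Inverses.
Context {Cat : Category}.

Definition inverses {a b : Cat} (f : hom a b) (g : hom b a) : Prop :=
  g ∘ f = idm a /\ f ∘ g = idm b.

Lemma inverses_id (a : Cat) : inverses (idm a) (idm a).
Proof. split; apply cmp_idl. Qed.

Lemma inverses_sym {a b : Cat} (f : hom a b) (g : hom b a) :
  inverses f g -> inverses g f.
Proof. intros [H1 H2]; split; assumption. Qed.

Lemma inverses_cmp {a b c : Cat} (f : hom a b) (g : hom b a) (f' : hom b c) (g' : hom c b) :
  inverses f g -> inverses f' g' -> inverses (f' ∘ f) (g ∘ g').
Proof.
  intros [Hf1 Hf2] [Hf1' Hf2']; split.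
  - rewrite cmp_assoc, <- (cmp_assoc g g' f'), Hf1', cmp_idr; exact Hf1.
  - rewrite cmp_assoc, <- (cmp_assoc f' f g), Hf2, cmp_idr; exact Hf2'.
Qed.

Lemma inverses_unique {a b : Cat} (f : hom a b) (g g' : hom b a) :
  inverses f g -> inverses f g' -> g = g'.
Proof.
  intros [Hg1 Hg2] [Hg1' Hg2'].
  rewrite <- (cmp_idr g), <- Hg2', cmp_assoc, Hg1, cmp_idl; reflexivity.
Qed.

Lemma inverses_eq_iff {a b : Cat} (f f' : hom a b) (g g' : hom b a) :
  inverses f g -> inverses f' g' -> (f = f' <-> g = g').
Proof.
  intros Hfg Hfg'; split; intros <-.
  - exact (inverses_unique f g g' Hfg Hfg').
  - exact (inverses_unique g f f' (inverses_sym _ _ Hfg) (inverses_sym _ _ Hfg')).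
Qed.

Lemma cmp_inverses_iff {a a' b : Cat} (s : hom a b) (t : hom a' b) (u : hom a' a) (v : hom a a') :
  inverses u v -> (s ∘ u = t <-> s = t ∘ v).
Proof.
  intros [Huv Hvu]; split; [intros <- | intros ->].
  - rewrite <- cmp_assoc, Hvu, cmp_idr; reflexivity.
  - rewrite <- cmp_assoc, Huv, cmp_idr; reflexivity.
Qed.

Lemma inverses_conj_iff {x y x' y' : Cat} (a : hom x y) (a' : hom y x) (b : hom x' y')
  (b' : hom y' x') (u : hom y y') (v : hom x x') :
  inverses a a' -> inverses b b' -> (u ∘ a = b ∘ v <-> v ∘ a' = b' ∘ u).
Proof.
  assert (conj_inv : forall x y x' y' (a : hom x y) a' (b : hom x' y') b' u v,
             inverses a a' -> inverses b b' -> u ∘ a = b ∘ v -> v ∘ a' = b' ∘ u).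
  { clear; intros x y x' y' a a' b b' u v [Ha1 Ha2] [Hb1 Hb2] H.
    rewrite <- (cmp_idl (v ∘ a')), <- Hb1, <- (cmp_assoc b' b), (cmp_assoc b v), <- H.
    rewrite <- !cmp_assoc, Ha2, cmp_idr; reflexivity. }
  intros Ha Hb; split; apply conj_inv; auto using inverses_sym.
Qed.

Definition inv {a b : Cat} (f : hom a b) (H : is_iso f) : hom b a :=
  proj1_sig (constructive_indefinite_description _ H).

Lemma inv_inverses {a b : Cat} (f : hom a b) (H : is_iso f) : inverses f (inv f H).
Proof. exact (proj2_sig (constructive_indefinite_description _ H)). Qed.

Lemma inv_is_iso {a b : Cat} (f : hom a b) (H : is_iso f) : is_iso (inv f H).
Proof. exists f; exact (inverses_sym _ _ (inv_inverses f H)). Qed.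

Lemma inv_inv {a b : Cat} (f : hom a b) (H : is_iso f) (H' : is_iso (inv f H)) :
  inv (inv f H) H' = f.
Proof.
  apply (inverses_unique (inv f H)); [apply inv_inverses |].
  apply inverses_sym, inv_inverses.
Qed.

End Inverses.

Lemma functor_eq {A B : Category} (F1 F2 : Functor A B) :
  (forall a, fob F1 a = fob F2 a) ->
  (forall a b (f : hom a b), JMeq (fmor F1 f) (fmor F2 f)) -> F1 = F2.
Proof.
  destruct F1 as [o1 m1 i1 c1], F2 as [o2 m2 i2 c2]; simpl; intros Ho Hm.
  assert (o1 = o2) as <- by (apply functional_extensionality; exact Ho).
  assert (m1 = m2) as <-.
  { do 3 (apply functional_extensionality_dep; intro).
    apply JMeq_eq, Hm. }
  f_equal; apply proof_irrelevance.
Qed.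

Lemma CompFunctor_assoc {A B C D : Category} (H : Functor C D) (G : Functor B C)
  (F : Functor A B) :
  CompFunctor H (CompFunctor G F) = CompFunctor (CompFunctor H G) F.
Proof. apply functor_eq; reflexivity. Qed.

Lemma CompFunctor_idr {A B : Category} (F : Functor A B) : CompFunctor F (IdFunctor A) = F.
Proof. apply functor_eq; reflexivity. Qed.

Lemma CatIso_sym (A B : Category) : CatIso A B -> CatIso B A.
Proof. intros (Phi & Psi & H1 & H2); exists Psi, Phi; split; assumption. Qed.

Lemma CatIso_trans (A B C : Category) : CatIso A B -> CatIso B C -> CatIso A C.
Proof.
  intros (Phi & Psi & H1 & H2) (Phi' & Psi' & H1' & H2').
  exists (CompFunctor Phi' Phi), (CompFunctor Psi Psi'); split.
  - rewrite CompFunctor_assoc, <- (CompFunctor_assoc Psi Psi'), H1', CompFunctor_idr.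
    exact H1.
  - rewrite CompFunctor_assoc, <- (CompFunctor_assoc Phi' Phi), H2, CompFunctor_idr.
    exact H2'.
Qed.

Lemma ZLob_eq {C : MonoidalCategory} {D : BimodData C C} (s t : ZLob C D) :
  zl_m s = zl_m t -> (forall X, JMeq (zl_s s X) (zl_s t X)) -> s = t.
Proof.
  destruct s as [m σ], t as [m' σ']; simpl; intros <- Hσ.
  assert (σ = σ') as <- by (apply functional_extensionality_dep; intro; apply JMeq_eq, Hσ).
  f_equal; apply proof_irrelevance.
Qed.

Lemma ZRob_eq {C : MonoidalCategory} {D : BimodData C C} (s t : ZRob C D) :
  zr_m s = zr_m t -> (forall X, JMeq (zr_s s X) (zr_s t X)) -> s = t.
Proof.
  destruct s as [m σ], t as [m' σ']; simpl; intros <- Hσ.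
  assert (σ = σ') as <- by (apply functional_extensionality_dep; intro; apply JMeq_eq, Hσ).
  f_equal; apply proof_irrelevance.
Qed.

Lemma ZL_hom_JMeq {C : MonoidalCategory} {D : BimodData C C} (s s' t t' : ZL C D)
  (f : hom s t) (f' : hom s' t') :
  s = s' -> t = t' -> JMeq (proj1_sig f) (proj1_sig f') -> JMeq f f'.
Proof. intros <- <- ->%JMeq_eq%sig_eq; reflexivity. Qed.

Lemma ZR_hom_JMeq {C : MonoidalCategory} {D : BimodData C C} (s s' t t' : ZR C D)
  (f : hom s t) (f' : hom s' t') :
  s = s' -> t = t' -> JMeq (proj1_sig f) (proj1_sig f') -> JMeq f f'.
Proof. intros <- <- ->%JMeq_eq%sig_eq; reflexivity. Qed.

Lemma PseudoNat_eq {B K : Bicategory} {P Q : Pseudofunctor B K} (χ ψ : PseudoNat P Q) :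
  tc χ = tc ψ -> (forall x y (f : B1 B x y), JMeq (tn χ f) (tn ψ f)) -> χ = ψ.
Proof.
  destruct χ as [t n], ψ as [t' n']; simpl; intros <- Hn.
  assert (n = n') as <-.
  { do 3 (apply functional_extensionality_dep; intro); apply JMeq_eq, Hn. }
  f_equal; apply proof_irrelevance.
Qed.

Lemma Pseudo_hom_JMeq {B K : Bicategory} {P Q : Pseudofunctor B K} (χ χ' ψ ψ' : Pseudo P Q)
  (μ : hom χ ψ) (μ' : hom χ' ψ') :
  χ = χ' -> ψ = ψ' -> (forall x, JMeq (proj1_sig μ x) (proj1_sig μ' x)) -> JMeq μ μ'.
Proof.
  intros <- <- Hμ.
  assert (proj1_sig μ = proj1_sig μ') as ->%sig_eq
    by (apply functional_extensionality_dep; intro; apply JMeq_eq, Hμ).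
  reflexivity.
Qed.

Lemma hc2_inverses (K : Bicategory) {x y z : B0 K} {g g' : B1 K y z} {f f' : B1 K x y}
  (b : hom g g') (b' : hom g' g) (a : hom f f') (a' : hom f' f) :
  inverses b b' -> inverses a a' -> inverses (hc2 K b a) (hc2 K b' a').
Proof.
  intros [Hb1 Hb2] [Ha1 Ha2]; split; rewrite <- hc2_cmp.
  - rewrite Hb1, Ha1; apply hc2_id.
  - rewrite Hb2, Ha2; apply hc2_id.
Qed.

Section BimoduleInverses.
Context {L R : MonoidalCategory} (D : BimodData L R).

Lemma lact2_inverses {c c' : mC L} {m m' : bm D} (f : hom c c') (f' : hom c' c)
  (g : hom m m') (g' : hom m' m) :
  inverses f f' -> inverses g g' -> inverses (lact2 D f g) (lact2 D f' g').
Proof.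
  intros [Hf1 Hf2] [Hg1 Hg2]; split; rewrite <- lact2_cmp.
  - rewrite Hf1, Hg1; apply lact2_id.
  - rewrite Hf2, Hg2; apply lact2_id.
Qed.

Lemma ract2_inverses {m m' : bm D} {d d' : mC R} (g : hom m m') (g' : hom m' m)
  (f : hom d d') (f' : hom d' d) :
  inverses g g' -> inverses f f' -> inverses (ract2 D g f) (ract2 D g' f').
Proof.
  intros [Hg1 Hg2] [Hf1 Hf2]; split; rewrite <- ract2_cmp.
  - rewrite Hg1, Hf1; apply ract2_id.
  - rewrite Hg2, Hf2; apply ract2_id.
Qed.

End BimoduleInverses.

(* Explicit inverses, rather than [inv], make the restriction along an identity
   functor agree on the nose with the unrestricted bimodule. *)
Record MonFunInv {C D : MonoidalCategory} (P : MonFunData C D) := {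
  mf2i : forall a b,
    hom (fob (mf _ _ P) (tens C a b)) (tens D (fob (mf _ _ P) a) (fob (mf _ _ P) b));
  mf0i : hom (fob (mf _ _ P) (munit C)) (munit D);
  mf2_inverses : forall a b, inverses (mf2 _ _ P a b) (mf2i a b);
  mf0_inverses : inverses (mf0 _ _ P) mf0i }.

Arguments mf2i {C D P} _ _ _.
Arguments mf0i {C D P} _.
Arguments mf2_inverses {C D P} _ _ _.
Arguments mf0_inverses {C D P} _.

Definition bimod_restr_l {L L' R : MonoidalCategory} (B : BimodData L R)
  (Q : MonFunData L' L) (Qi : MonFunInv Q) : BimodData L' R.
Proof.
  refine (@Build_BimodData L' R (bm B)
            (fun c m => lact B (fob (mf _ _ Q) c) m)
            (fun _ _ _ _ a b => lact2 B (fmor (mf _ _ Q) a) b) _ _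
            (ract B) (@ract2 _ _ B) (ract2_id _ _ B) (ract2_cmp _ _ B)
            (fun c c' m => l_as B _ _ m ∘ lact2 B (mf2i Qi c c') (idm m))
            (fun c c' m => lact2 B (mf2 _ _ Q c c') (idm m) ∘ l_asi B _ _ m)
            (r_as B) (r_asi B) (fun c m d => mid B _ m d) (fun c m d => midi B _ m d)
            (fun m => l_un B m ∘ lact2 B (mf0i Qi) (idm m))
            (fun m => lact2 B (mf0 _ _ Q) (idm m) ∘ l_uni B m)
            (r_un B) (r_uni B)).
  - intros; simpl; rewrite fmor_id; apply lact2_id.
  - intros; simpl; rewrite fmor_cmp; apply lact2_cmp.
Defined.

Definition bimod_restr_r {L R R' : MonoidalCategory} (B : BimodData L R)
  (P : MonFunData R' R) (Pi : MonFunInv P) : BimodData L R'.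
Proof.
  refine (@Build_BimodData L R' (bm B)
            (lact B) (@lact2 _ _ B) (lact2_id _ _ B) (lact2_cmp _ _ B)
            (fun m d => ract B m (fob (mf _ _ P) d))
            (fun _ _ _ _ a b => ract2 B a (fmor (mf _ _ P) b)) _ _
            (l_as B) (l_asi B)
            (fun m d d' => r_as B m _ _ ∘ ract2 B (idm m) (mf2i Pi d d'))
            (fun m d d' => ract2 B (idm m) (mf2 _ _ P d d') ∘ r_asi B m _ _)
            (fun c m d => mid B c m _) (fun c m d => midi B c m _)
            (l_un B) (l_uni B)
            (fun m => r_un B m ∘ ract2 B (idm m) (mf0i Pi))
            (fun m => ract2 B (idm m) (mf0 _ _ P) ∘ r_uni B m)).
  - intros; simpl; rewrite fmor_id; apply ract2_id.
  - intros; simpl; rewrite fmor_cmp; apply ract2_cmp.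
Defined.

Record bimod_invertible {L R : MonoidalCategory} (D : BimodData L R) : Prop := {
  l_as_inverses : forall c c' m, inverses (l_as D c c' m) (l_asi D c c' m);
  r_as_inverses : forall m d d', inverses (r_as D m d d') (r_asi D m d d');
  mid_inverses : forall c m d, inverses (mid D c m d) (midi D c m d);
  l_un_inverses : forall m, inverses (l_un D m) (l_uni D m);
  r_un_inverses : forall m, inverses (r_un D m) (r_uni D m) }.

Lemma bimodK_invertible (K : Bicategory) (x y : B0 K) : bimod_invertible (bimodK K x y).
Proof.
  split; intros; split; simpl;
    first [ apply asc_inv1 | apply asc_inv2 | apply lu_inv1 | apply lu_inv2
          | apply ru_inv1 | apply ru_inv2 ].
Qed.

Lemma bimod_restr_l_invertible {L L' R : MonoidalCategory} (B : BimodData L R)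
  (Q : MonFunData L' L) (Qi : MonFunInv Q) :
  bimod_invertible B -> bimod_invertible (bimod_restr_l B Q Qi).
Proof.
  intros []; split; intros; simpl; auto.
  - apply inverses_cmp; auto.
    apply lact2_inverses; [apply inverses_sym, mf2_inverses | apply inverses_id].
  - apply inverses_cmp; auto.
    apply lact2_inverses; [apply inverses_sym, mf0_inverses | apply inverses_id].
Qed.

Lemma bimod_restr_r_invertible {L R R' : MonoidalCategory} (B : BimodData L R)
  (P : MonFunData R' R) (Pi : MonFunInv P) :
  bimod_invertible B -> bimod_invertible (bimod_restr_r B P Pi).
Proof.
  intros []; split; intros; simpl; auto.
  - apply inverses_cmp; auto.
    apply ract2_inverses; [apply inverses_id | apply inverses_sym, mf2_inverses].
  - apply inverses_cmp; auto.
    apply ract2_inverses; [apply inverses_id | apply inverses_sym, mf0_inverses].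
Qed.

Definition castIdMon_inv (K : Bicategory) (o : B0 K) (C : MonoidalCategory)
  (e : End K o = C) : MonFunInv (castIdMon K o C e).
Proof.
  destruct e.
  refine (Build_MonFunInv _ _ (castIdMon K o _ eq_refl) (fun a b => idm _) (idm _) _ _);
    intros; apply inverses_id.
Defined.

Lemma BimodData_ext L R bm0 lact0 lact20 p1 p2 q1 q2 ract0 ract20 p3 p4 q3 q4
  las las' lasi lasi' ras ras' rasi rasi' md md' mdi mdi' lun lun' luni luni'
  run run' runi runi' :
  las = las' -> lasi = lasi' -> ras = ras' -> rasi = rasi' -> md = md' -> mdi = mdi' ->
  lun = lun' -> luni = luni' -> run = run' -> runi = runi' ->
  @Build_BimodData L R bm0 lact0 lact20 p1 p2 ract0 ract20 p3 p4
     las lasi ras rasi md mdi lun luni run runi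
  = @Build_BimodData L R bm0 lact0 lact20 q1 q2 ract0 ract20 q3 q4
     las' lasi' ras' rasi' md' mdi' lun' luni' run' runi'.
Proof. intros; subst; f_equal; apply proof_irrelevance. Qed.

Lemma bimod_restr_l_castIdMon {R : MonoidalCategory} (K : Bicategory) (o : B0 K)
  (C : MonoidalCategory) (e : End K o = C) (B : BimodData (End K o) R) :
  match e in _ = L return BimodData L R with eq_refl => B end
  = bimod_restr_l B (castIdMon K o C e) (castIdMon_inv K o C e).
Proof.
  destruct e, B as [bm0 lact0 lact20 lact2_id0].
  unfold bimod_restr_l; simpl.
  apply BimodData_ext; repeat (apply functional_extensionality_dep; intro);
    rewrite ?lact2_id0, ?cmp_idl, ?cmp_idr; reflexivity.
Qed.

Lemma bimod_restr_r_castIdMon {L : MonoidalCategory} (K : Bicategory) (o : B0 K)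
  (C : MonoidalCategory) (e : End K o = C) (B : BimodData L (End K o)) :
  match e in _ = R return BimodData L R with eq_refl => B end
  = bimod_restr_r B (castIdMon K o C e) (castIdMon_inv K o C e).
Proof.
  destruct e, B as [bm0 lact0 lact20 lact2_id0 lact2_cmp0 ract0 ract20 ract2_id0].
  unfold bimod_restr_r; simpl.
  apply BimodData_ext; repeat (apply functional_extensionality_dep; intro);
    rewrite ?ract2_id0, ?cmp_idl, ?cmp_idr; reflexivity.
Qed.

Lemma bimodC_eq_restr (K : Bicategory) (o0 o1 : B0 K) (C : MonoidalCategory)
  (e0 : End K o0 = C) (e1 : End K o1 = C) :
  bimodC K o0 o1 C e0 e1
  = bimod_restr_l
      (bimod_restr_r (bimodK K o0 o1) (castIdMon K o0 C e0) (castIdMon_inv K o0 C e0))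
      (castIdMon K o1 C e1) (castIdMon_inv K o1 C e1).
Proof.
  unfold bimodC; rewrite bimod_restr_l_castIdMon, bimod_restr_r_castIdMon; reflexivity.
Qed.

Section CenterInversion.
Context {C : MonoidalCategory} (D : BimodData C C) (HD : bimod_invertible D).

Lemma center_tens_inverses_iff (m : bm D)
  (σ : forall X, hom (ract D m X) (lact D X m)) (ρ : forall X, hom (lact D X m) (ract D m X))
  (Hσρ : forall X, inverses (σ X) (ρ X)) (X Y : mC C) :
  σ (tens C Y X) = l_asi D Y X m ∘ lact2 D (idm Y) (σ X) ∘ mid D Y m X
                   ∘ ract2 D (σ Y) (idm X) ∘ r_as D m Y X
  <-> ρ (tens C Y X) = r_asi D m Y X ∘ ract2 D (ρ Y) (idm X) ∘ midi D Y m X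
                       ∘ lact2 D (idm Y) (ρ X) ∘ l_as D Y X m.
Proof.
  (* The inverse is nested to the right so that [inverses_cmp] peels one factor at a time. *)
  assert (Hinv : inverses
    (l_asi D Y X m ∘ lact2 D (idm Y) (σ X) ∘ mid D Y m X ∘ ract2 D (σ Y) (idm X) ∘ r_as D m Y X)
    (r_asi D m Y X ∘ (ract2 D (ρ Y) (idm X) ∘ (midi D Y m X
      ∘ (lact2 D (idm Y) (ρ X) ∘ l_as D Y X m))))).
  { destruct HD; repeat apply inverses_cmp;
      try apply lact2_inverses; try apply ract2_inverses; auto using inverses_sym, inverses_id. }
  rewrite !cmp_assoc in Hinv.
  exact (inverses_eq_iff _ _ _ _ (Hσρ _) Hinv).
Qed.

Lemma center_unit_inverses_iff (m : bm D) (σ : hom (ract D m (munit C)) (lact D (munit C) m))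
  (ρ : hom (lact D (munit C) m) (ract D m (munit C))) :
  inverses σ ρ -> (σ = l_uni D m ∘ r_un D m <-> ρ = r_uni D m ∘ l_un D m).
Proof.
  intros Hσρ; apply (inverses_eq_iff _ _ _ _ Hσρ).
  destruct HD; apply inverses_cmp; auto using inverses_sym.
Qed.

Definition ZR_of_ZL (s : ZLob C D) : ZRob C D.
Proof.
  pose (ρ := fun X => inv (zl_s s X) (zl_iso _ _ s X)).
  assert (Hσρ : forall X, inverses (zl_s s X) (ρ X)) by (intro; apply inv_inverses).
  refine (Build_ZRob C D (zl_m s) ρ (fun X => inv_is_iso _ _) _ _ _).
  - intros X X' f; apply (inverses_conj_iff (zl_s s X) _ (zl_s s X')); auto.
    apply zl_nat.
  - intros X Y; apply (proj1 (center_tens_inverses_iff _ _ _ Hσρ X Y)), zl_tens.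
  - apply (proj1 (center_unit_inverses_iff _ _ _ (Hσρ _))), zl_unit.
Defined.

Definition ZL_of_ZR (s : ZRob C D) : ZLob C D.
Proof.
  pose (σ := fun X => inv (zr_s s X) (zr_iso _ _ s X)).
  assert (Hσρ : forall X, inverses (σ X) (zr_s s X))
    by (intro; apply inverses_sym, inv_inverses).
  refine (Build_ZLob C D (zr_m s) σ (fun X => inv_is_iso _ _) _ _ _).
  - intros X X' f; apply (inverses_conj_iff _ (zr_s s X) _ (zr_s s X')); auto.
    apply zr_nat.
  - intros X Y; apply (proj2 (center_tens_inverses_iff _ _ _ Hσρ X Y)), zr_tens.
  - apply (proj2 (center_unit_inverses_iff _ _ _ (Hσρ _))), zr_unit.
Defined.

Lemma ZR_of_ZL_mor (s t : ZLob C D) (f : hom (zl_m s) (zl_m t)) :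
  is_zl_mor s t f -> is_zr_mor (ZR_of_ZL s) (ZR_of_ZL t) f.
Proof.
  intros Hf X; apply (inverses_conj_iff (zl_s s X) _ (zl_s t X)), Hf; apply inv_inverses.
Qed.

Lemma ZL_of_ZR_mor (s t : ZRob C D) (f : hom (zr_m s) (zr_m t)) :
  is_zr_mor s t f -> is_zl_mor (ZL_of_ZR s) (ZL_of_ZR t) f.
Proof.
  intros Hf X; apply (inverses_conj_iff _ (zr_s s X) _ (zr_s t X)), Hf;
    apply inverses_sym, inv_inverses.
Qed.

Definition ZL_to_ZR : Functor (ZL C D) (ZR C D).
Proof.
  refine (Build_Functor (ZL C D) (ZR C D) ZR_of_ZL
    (fun s t f => exist _ (proj1_sig f) (ZR_of_ZL_mor s t _ (proj2_sig f))) _ _);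
    intros; apply sig_eq; reflexivity.
Defined.

Definition ZR_to_ZL : Functor (ZR C D) (ZL C D).
Proof.
  refine (Build_Functor (ZR C D) (ZL C D) ZL_of_ZR
    (fun s t f => exist _ (proj1_sig f) (ZL_of_ZR_mor s t _ (proj2_sig f))) _ _);
    intros; apply sig_eq; reflexivity.
Defined.

End CenterInversion.

Lemma ZL_iso_ZR {C : MonoidalCategory} (D : BimodData C C) :
  bimod_invertible D -> CatIso (ZL C D) (ZR C D).
Proof.
  intros HD.
  assert (HL : forall s, ZL_of_ZR D HD (ZR_of_ZL D HD s) = s).
  { intros s; apply ZLob_eq; [reflexivity |].
    intro X; simpl; rewrite inv_inv; reflexivity. }
  assert (HR : forall s, ZR_of_ZL D HD (ZL_of_ZR D HD s) = s).
  { intros s; apply ZRob_eq; [reflexivity |].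
    intro X; simpl; rewrite inv_inv; reflexivity. }
  exists (ZL_to_ZR D HD), (ZR_to_ZL D HD); split; apply functor_eq; try exact HL;
    try exact HR; intros.
  - apply ZL_hom_JMeq; [apply HL | apply HL | reflexivity].
  - apply ZR_hom_JMeq; [apply HR | apply HR | reflexivity].
Qed.

Definition homMon {C : MonoidalCategory} {K : Bicategory} (F : Pseudofunctor (Del C) K)
  : MonFunData C (End K (pob F tt)) := homMonAt F (pob F tt) eq_refl.

Definition bimodFG {C : MonoidalCategory} {K : Bicategory} (F G : Pseudofunctor (Del C) K)
  (Fi : MonFunInv (homMon F)) (Gi : MonFunInv (homMon G)) : BimodData C C :=
  bimod_restr_l (bimod_restr_r (bimodK K (pob F tt) (pob G tt)) (homMon F) Fi) (homMon G) Gi.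

Section PseudoNatCenter.
Context {C : MonoidalCategory} {K : Bicategory} (F G : Pseudofunctor (Del C) K)
  (Fi : MonFunInv (homMon F)) (Gi : MonFunInv (homMon G)).

Local Notation D := (bimodFG F G Fi Gi).
Local Notation "F[ X ]" := (pf F (x := tt) (y := tt) X).
Local Notation "G[ X ]" := (pf G (x := tt) (y := tt) X).

Lemma center_tens_iff_tn_comp (m : B1 K (pob F tt) (pob G tt))
  (σ : forall X : mC C, hom (hc K m F[X]) (hc K G[X] m)) (X Y : mC C) :
  σ (tens C Y X) = l_asi D Y X m ∘ lact2 D (idm Y) (σ X) ∘ mid D Y m X
                   ∘ ract2 D (σ Y) (idm X) ∘ r_as D m Y X
  <-> σ (tens C Y X) ∘ hc2 K (idm m) (pc F Y X)
      = hc2 K (pc G Y X) (idm m) ∘ asci K G[Y] G[X] m ∘ hc2 K (idm G[Y]) (σ X)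
        ∘ asc K G[Y] m F[X] ∘ hc2 K (σ Y) (idm F[X]) ∘ asci K m F[Y] F[X].
Proof.
  rewrite (cmp_inverses_iff _ _ _ (hc2 K (idm m) (mf2i Fi Y X))).
  - simpl; rewrite !fmor_id, !cmp_assoc; reflexivity.
  - exact (hc2_inverses K _ _ _ _ (inverses_id m) (mf2_inverses Fi Y X)).
Qed.

Lemma center_unit_iff_tn_unit (m : B1 K (pob F tt) (pob G tt))
  (σ : hom (hc K m F[munit C]) (hc K G[munit C] m)) :
  σ = l_uni D m ∘ r_un D m
  <-> σ ∘ hc2 K (idm m) (pu F tt) = hc2 K (pu G tt) (idm m) ∘ lui K m ∘ ru K m.
Proof.
  rewrite (cmp_inverses_iff _ _ _ (hc2 K (idm m) (mf0i Fi))).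
  - simpl; rewrite !cmp_assoc; reflexivity.
  - exact (hc2_inverses K _ _ _ _ (inverses_id m) (mf0_inverses Fi)).
Qed.

Definition unit_tc (m : B1 K (pob F tt) (pob G tt)) : forall x, B1 K (pob F x) (pob G x) :=
  fun x => match x with tt => m end.

Definition unit_tn (m : B1 K (pob F tt) (pob G tt))
  (σ : forall X : mC C, hom (hc K m F[X]) (hc K G[X] m)) :
  forall x y (f : B1 (Del C) x y),
    hom (hc K (unit_tc m y) (pf F f)) (hc K (pf G f) (unit_tc m x)) :=
  fun x y => match x, y with tt, tt => σ end.

Definition PN_of_ZL (s : ZLob C D) : PseudoNat F G.
Proof.
  refine (Build_PseudoNat _ _ F G (unit_tc (zl_m s)) (unit_tn (zl_m s) (zl_s s)) _ _ _ _).
  - intros [] [] X; exact (zl_iso _ _ s X).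
  - intros [] [] X X' f; exact (eq_sym (zl_nat _ _ s X X' f)).
  - intros [] [] [] Y X; exact (proj1 (center_tens_iff_tn_comp _ _ X Y) (zl_tens _ _ s X Y)).
  - intros []; exact (proj1 (center_unit_iff_tn_unit _ _) (zl_unit _ _ s)).
Defined.

Definition ZL_of_PN (χ : PseudoNat F G) : ZLob C D.
Proof.
  refine (Build_ZLob C D (tc χ tt) (fun X => tn χ (x := tt) (y := tt) X) _ _ _ _).
  - intro X; exact (tn_iso _ _ χ tt tt X).
  - intros X X' f; exact (eq_sym (tn_nat _ _ χ tt tt X X' f)).
  - intros X Y; exact (proj2 (center_tens_iff_tn_comp _ _ X Y) (tn_comp _ _ χ tt tt tt Y X)).
  - exact (proj2 (center_unit_iff_tn_unit _ _) (tn_unit _ _ χ tt)).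
Defined.

Definition unit_tm {m m' : B1 K (pob F tt) (pob G tt)} (f : hom m m') :
  forall x, hom (unit_tc m x) (unit_tc m' x) := fun x => match x with tt => f end.

Lemma PN_of_ZL_mor (s t : ZLob C D) (f : hom (zl_m s) (zl_m t)) :
  is_zl_mor s t f -> is_modif (PN_of_ZL s) (PN_of_ZL t) (unit_tm f).
Proof.
  intros Hf [] [] X; specialize (Hf X); simpl in *; rewrite !fmor_id in Hf.
  exact (eq_sym Hf).
Qed.

Lemma ZL_of_PN_mor (χ ψ : PseudoNat F G) (μ : forall x, hom (tc χ x) (tc ψ x)) :
  is_modif χ ψ μ -> is_zl_mor (ZL_of_PN χ) (ZL_of_PN ψ) (μ tt).
Proof.
  intros Hμ X; specialize (Hμ tt tt X); simpl; rewrite !fmor_id.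
  exact (eq_sym Hμ).
Qed.

Definition PN_of_ZL_hom (s t : ZL C D) (f : hom s t) :
  @hom (Pseudo F G) (PN_of_ZL s) (PN_of_ZL t) :=
  exist _ (unit_tm (proj1_sig f)) (PN_of_ZL_mor s t _ (proj2_sig f)).

Lemma PN_of_ZL_hom_id (s : ZL C D) :
  PN_of_ZL_hom s s (idm s) = @idm (Pseudo F G) (PN_of_ZL s).
Proof.
  apply sig_eq, functional_extensionality_dep; intros [].
  exact (eq_refl (idm (zl_m s))).
Qed.

Lemma PN_of_ZL_hom_cmp (s t u : ZL C D) (g : hom t u) (f : hom s t) :
  PN_of_ZL_hom s u (g ∘ f)
  = @cmp (Pseudo F G) _ _ _ (PN_of_ZL_hom t u g) (PN_of_ZL_hom s t f).
Proof.
  apply sig_eq, functional_extensionality_dep; intros [].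
  exact (eq_refl (proj1_sig g ∘ proj1_sig f)).
Qed.

Definition ZL_to_Pseudo : Functor (ZL C D) (Pseudo F G) :=
  Build_Functor (ZL C D) (Pseudo F G) PN_of_ZL PN_of_ZL_hom PN_of_ZL_hom_id PN_of_ZL_hom_cmp.

Definition Pseudo_to_ZL : Functor (Pseudo F G) (ZL C D).
Proof.
  refine (Build_Functor (Pseudo F G) (ZL C D) ZL_of_PN
    (fun χ ψ μ => exist _ (proj1_sig μ tt) (ZL_of_PN_mor χ ψ _ (proj2_sig μ))) _ _);
    intros; apply sig_eq; reflexivity.
Defined.

End PseudoNatCenter.

Lemma ZL_iso_Pseudo {C : MonoidalCategory} {K : Bicategory} (F G : Pseudofunctor (Del C) K)
  (Fi : MonFunInv (homMon F)) (Gi : MonFunInv (homMon G)) :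
  CatIso (ZL C (bimodFG F G Fi Gi)) (Pseudo F G).
Proof.
  assert (HL : forall s, ZL_of_PN F G Fi Gi (PN_of_ZL F G Fi Gi s) = s)
    by (intro; apply ZLob_eq; reflexivity).
  assert (HP : forall χ, PN_of_ZL F G Fi Gi (ZL_of_PN F G Fi Gi χ) = χ).
  { intro; apply PseudoNat_eq.
    - apply functional_extensionality_dep; intros []; reflexivity.
    - intros [] [] X; reflexivity. }
  exists (ZL_to_Pseudo F G Fi Gi), (Pseudo_to_ZL F G Fi Gi); split; apply functor_eq;
    try exact HL; try exact HP; intros.
  - apply ZL_hom_JMeq; [apply HL | apply HL | reflexivity].
  - apply Pseudo_hom_JMeq; [apply HP | apply HP | intros []; reflexivity].
Qed.

Theorem Pseudo_iso_centers {C : MonoidalCategory} {K : Bicategory}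
  (F G : Pseudofunctor (Del C) K) (Fi : MonFunInv (homMon F)) (Gi : MonFunInv (homMon G)) :
  CatIso (ZL C (bimodFG F G Fi Gi)) (Pseudo F G) /\
  CatIso (Pseudo F G) (ZR C (bimodFG F G Fi Gi)).
Proof.
  pose proof (ZL_iso_Pseudo F G Fi Gi) as HLP; split; [exact HLP |].
  apply (CatIso_trans _ _ _ (CatIso_sym _ _ HLP)), ZL_iso_ZR.
  apply bimod_restr_l_invertible, bimod_restr_r_invertible, bimodK_invertible.
Qed.

Theorem corollary3p8 (C : MonoidalCategory) (K : Bicategory) (o0 o1 : B0 K)
  (Hdist : o0 <> o1)
  (e0 : End K o0 = C) (e1 : End K o1 = C)
  (F G : Pseudofunctor (Del C) K)
  (HFob : pob F tt = o0) (HGob : pob G tt = o1)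
  (HFid : homMonAt F o0 HFob = castIdMon K o0 C e0)
  (HGid : homMonAt G o1 HGob = castIdMon K o1 C e1) :
  CatIso (ZL C (bimodC K o0 o1 C e0 e1)) (Pseudo F G) /\
  CatIso (Pseudo F G) (ZR C (bimodC K o0 o1 C e0 e1)).
Proof.
  subst o0 o1; rewrite bimodC_eq_restr.
  generalize (castIdMon_inv K _ C e0) (castIdMon_inv K _ C e1).
  rewrite <- HFid, <- HGid.
  apply Pseudo_iso_centers.
Qed.
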